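(* Let $k\in\{1,\dots,d\}$ and $p\ge 1$. Then the function $R:\mathbb{P}_d\to\mathbb{R}$ defined by $R(X)=\left|\sum_{j=1}^k\lambda_j^{\downarrow}(X)\right|^p$ is geodesically convex on $\mathbb{P}_d$.
   Context: $\mathbb{P}_d$ denotes the set of real symmetric $d\times d$ positive definite matrices, equipped with the affine-invariant Riemannian metric $\langle U,V\rangle_X=\operatorname{tr}(X^{-1}UX^{-1}V)$, whose geodesic from $A$ to $B$ is $\gamma(t)=A^{1/2}(A^{-1/2}BA^{-1/2})^tA^{1/2}$, $t\in[0,1]$. A function $f$ on $\mathbb{P}_d$ is geodesically convex if $t\mapsto f(\gamma(t))$ is convex on $[0,1]$ for every such geodesic. $\lambda_1^{\downarrow}(X)\ge\dots\ge\lambda_d^{\downarrow}(X)$ denote the eigenvalues of $X$ in decreasing order. *)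

From mathcomp Require Import all_boot all_order all_algebra.
From mathcomp Require Import boolp reals exp.
Set Implicit Arguments. Unset Strict Implicit. Unset Printing Implicit Defensive.
Import Order.TTheory GRing.Theory Num.Theory.
Local Open Scope ring_scope.

Section PD.
Variables (R : realType) (d : nat).

Definition posdef (X : 'M[R]_d) : Prop :=
  X^T = X /\ forall v : 'rV[R]_d, v != 0 -> 0 < (v *m X *m v^T) 0 0.

Definition spec_decomp (X : 'M[R]_d) (Uw : 'M[R]_d * 'rV[R]_d) : Prop :=
  Uw.1 *m Uw.1^T = 1%:M /\ X = Uw.1 *m diag_mx Uw.2 *m Uw.1^T.

(* real power X^t via spectral calculus (meaningful for X posdef; the
   result does not depend on the chosen diagonalization) *)
Definition mpow (X : 'M[R]_d) (t : R) : 'M[R]_d :=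
  match pselect (exists Uw, spec_decomp X Uw) with
  | left h => let Uw := projT1 (cid h) in
      Uw.1 *m diag_mx (map_mx (fun x => powR x t) Uw.2) *m Uw.1^T
  | right _ => X
  end.

Definition geodesic (A B : 'M[R]_d) (t : R) : 'M[R]_d :=
  mpow A (2^-1) *m mpow (mpow A (- 2^-1) *m B *m mpow A (- 2^-1)) t
    *m mpow A (2^-1).

(* eigenvalues in decreasing order, with multiplicity: the decreasingly
   sorted list of roots of the characteristic polynomial (exists for real
   symmetric matrices; empty list otherwise) *)
Definition eigs_dec (X : 'M[R]_d) : seq R :=
  match pselect (exists s : seq R, sorted (fun x y => y <= x) s /\
                   char_poly X = \prod_(a <- s) ('X - a%:P)) with
  | left h => projT1 (cid h)
  | right _ => [::]
  end.

(* lambda_j^down(X), 1-indexed *)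
Definition eig_dec (X : 'M[R]_d) (j : nat) : R := nth 0 (eigs_dec X) j.-1.

Definition geod_convex (f : 'M[R]_d -> R) : Prop :=
  forall A B : 'M[R]_d, posdef A -> posdef B ->
  forall s u a : R, 0 <= s <= 1 -> 0 <= u <= 1 -> 0 <= a <= 1 ->
    f (geodesic A B ((1 - a) * s + a * u))
      <= (1 - a) * f (geodesic A B s) + a * f (geodesic A B u).

End PD.

From mathcomp Require Import all_boot all_order all_algebra.
From mathcomp Require Import boolp reals exp sequences convex hoelder interval_inference.
From mathcomp Require Import perm zify ring lra complex spectral.

(* Along the geodesic, gamma(t) = P diag(mu^t) P^T, where P = A^(1/2) Q and
   Q diag(mu) Q^T diagonalizes A^(-1/2) B A^(-1/2) orthogonally.  By Ky Fan's
   maximum principle the sum of the k largest eigenvalues of a symmetric X is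
   the maximum of tr(V^T X V) over d x k matrices V with orthonormal columns,
   and tr(V^T gamma(t) V) = sum_i c_i mu_i^t with c_i >= 0 is a nonnegative
   convex function of t.  A maximum of convex functions is convex, and
   x |-> |x|^p is convex and nondecreasing on [0, +oo).  The spectral theorem
   for real symmetric matrices is obtained by deflating along a real
   eigenvector, completed to an orthogonal matrix by a Householder reflection. *)

Set Implicit Arguments.
Unset Strict Implicit.
Unset Printing Implicit Defensive.

Import Order.TTheory GRing.Theory Num.Theory.
Local Open Scope ring_scope.

Section ScalarConvexity.
Variable R : realType.

Lemma expR_convex_comb (a x y : R) : 0 <= a <= 1 ->
  expR ((1 - a) * x + a * y) <= (1 - a) * expR x + a * expR y.
Proof.
case/andP=> a0 a1.
have := @convex_expR R (Itv01 a0 a1) y x.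
by rewrite !convRE /= addrC [X in _ <= X]addrC.
Qed.

(* This holds for every [m], also for [m < 0] where [ln m] is a junk value;
   hence only the symmetry of [A] and [B] is used in the end. *)
Lemma powR_convex_exponent (m s u a : R) : 0 <= s -> 0 <= u -> 0 <= a <= 1 ->
  powR m ((1 - a) * s + a * u) <= (1 - a) * powR m s + a * powR m u.
Proof.
move=> s0 u0 /andP[a0 a1]; have a1' : 0 <= 1 - a by rewrite subr_ge0.
rewrite /powR; case: eqP => _; last by rewrite mulrDl -!mulrA expR_convex_comb ?a0.
have [c0|c0] := eqVneq ((1 - a) * s + a * u) 0; last by rewrite addr_ge0 ?mulr_ge0.
(* [powR 0 t] is the indicator of [t = 0]; when the combination vanishes, every
   endpoint carrying positive weight vanishes too *)
move/eqP: c0; rewrite paddr_eq0 ?mulr_ge0 // => /andP[/eqP sa /eqP ua].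
have -> : (1 - a) * (s == 0)%:R = 1 - a.
  have [_|s_neq0] := eqVneq s 0; first by rewrite mulr1.
  by move/eqP: sa; rewrite mulf_eq0 (negPf s_neq0) orbF => /eqP ->; rewrite mul0r.
have -> : a * (u == 0)%:R = a.
  have [_|u_neq0] := eqVneq u 0; first by rewrite mulr1.
  by move/eqP: ua; rewrite mulf_eq0 (negPf u_neq0) orbF => /eqP ->; rewrite mul0r.
by rewrite subrK.
Qed.

Lemma powR_convex_base (p x y a : R) : 1 <= p -> 0 <= x -> 0 <= y -> 0 <= a <= 1 ->
  powR ((1 - a) * x + a * y) p <= (1 - a) * powR x p + a * powR y p.
Proof.
move=> p1 x0 y0 /andP[a0 a1].
have := @convex_powR R p p1 (Itv01 a0 a1) y x; rewrite convRE => /= convex_ab.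
rewrite addrC [X in _ <= X]addrC; apply: convex_ab.
  by apply: classical_sets.mem_set; rewrite /= in_itv /= y0.
by apply: classical_sets.mem_set; rewrite /= in_itv /= x0.
Qed.

Lemma norm_powR_le_convex_comb (p x y z a : R) : 1 <= p ->
  0 <= x -> 0 <= y -> 0 <= z -> 0 <= a <= 1 -> x <= (1 - a) * y + a * z ->
  powR `|x| p <= (1 - a) * powR `|y| p + a * powR `|z| p.
Proof.
move=> p1 x0 y0 z0 ha xle; rewrite !ger0_norm //.
have /andP[a0 a1] := ha; have a1' : 0 <= 1 - a by rewrite subr_ge0.
apply: (le_trans _ (powR_convex_base p1 y0 z0 ha)).
by apply: ge0_ler_powR; rewrite ?nnegrE ?addr_ge0 ?mulr_ge0 // (le_trans _ p1).
Qed.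

End ScalarConvexity.

Section Householder.
Variable R : realFieldType.

Lemma mul_row_tr_gt0 n (x : 'rV[R]_n) : x != 0 -> 0 < (x *m x^T) 0 0.
Proof.
move=> x_neq0; have -> : (x *m x^T) 0 0 = \sum_j x 0 j ^+ 2.
  by rewrite mxE; apply: eq_bigr => j _; rewrite mxE expr2.
rewrite lt_def psumr_eq0 => [|j _]; last exact: sqr_ge0.
rewrite sumr_ge0 ?andbT => [|j _]; last exact: sqr_ge0.
apply: contra x_neq0 => /allP x0; apply/eqP/rowP => j; rewrite mxE.
by apply/eqP; have /= := x0 j (mem_index_enum j); rewrite sqrf_eq0.
Qed.

Definition reflmx n (w : 'rV[R]_n) : 'M[R]_n :=
  1%:M - (2 / (w *m w^T) 0 0) *: (w^T *m w).

Lemma reflmx_sym n (w : 'rV[R]_n) : (reflmx w)^T = reflmx w.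
Proof. by rewrite linearB /= linearZ /= trmx1 trmx_mul trmxK. Qed.

Lemma reflmx_orthogonal n (w : 'rV[R]_n) :
  w != 0 -> reflmx w *m (reflmx w)^T = 1%:M.
Proof.
move=> w_neq0; rewrite reflmx_sym /reflmx; set q := (w *m w^T) 0 0; set c := 2 / q.
have q_neq0 : q != 0 by rewrite gt_eqF ?mul_row_tr_gt0.
have wwT : w *m w^T = q%:M by rewrite [LHS]mx11_scalar.
have PP : w^T *m w *m (w^T *m w) = q *: (w^T *m w).
  by rewrite mulmxA -[w^T *m w *m w^T]mulmxA wwT mul_mx_scalar scalemxAl.
rewrite mulmxBl mul1mx mulmxBr mulmx1.
rewrite -scalemxAl -scalemxAr PP !scalerA -addrA -opprD -scalerBl -scalerDl.
have -> : c + (c - c * c * q) = 0 by rewrite -mulrA [c * q]mulfVK // /c; ring.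
by rewrite scale0r subr0.
Qed.

Lemma mul_reflmx_swap n (u v : 'rV[R]_n) : u *m u^T = 1%:M -> v *m v^T = 1%:M ->
  u != v -> u *m reflmx (u - v) = v.
Proof.
move=> uuT vvT u_neq_v; set b := (u *m v^T) 0 0.
have uvT : u *m v^T = b%:M by rewrite [LHS]mx11_scalar.
have vuT : v *m u^T = b%:M by rewrite -[LHS]trmxK trmx_mul trmxK uvT tr_scalar_mx.
have uwT : u *m (u - v)^T = (1 - b)%:M by rewrite linearB /= mulmxBr uuT uvT raddfB.
have wwT : ((u - v) *m (u - v)^T) 0 0 = 2 * (1 - b).
  by rewrite linearB !(mulmxBl, mulmxBr) uuT vvT uvT vuT !mxE /=; ring.
have b_neq1 : 1 - b != 0.
  have : u - v != 0 by rewrite subr_eq0.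
  by move/mul_row_tr_gt0; rewrite wwT pmulr_rgt0 // => /gt_eqF ->.
rewrite /reflmx wwT mulmxBr mulmx1 -scalemxAr mulmxA uwT mul_scalar_mx scalerA.
by rewrite invfM mulrA divff ?pnatr_eq0 // mul1r mulVf // scale1r opprB addrC subrK.
Qed.

Lemma orthogonal_completion n (v : 'rV[R]_n.+1) : v *m v^T = 1%:M ->
  exists H : 'M[R]_n.+1, H *m H^T = 1%:M /\ row 0 H = v.
Proof.
move=> vvT; pose e : 'rV[R]_n.+1 := delta_mx 0 0.
have [<-|e_neq_v] := eqVneq e v; first by exists 1%:M; rewrite trmx1 mulmx1 row1.
have eeT : e *m e^T = 1%:M.
  by rewrite trmx_delta mul_delta_mx; apply/matrixP => i j; rewrite !ord1 !mxE.
exists (reflmx (e - v)); split; first by rewrite reflmx_orthogonal // subr_eq0.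
by rewrite rowE mul_reflmx_swap.
Qed.

End Householder.

Section SymmetricSpectral.
Variable R : rcfType.

Lemma symmetric_eigenvalue n (A : 'M[R]_n.+1) : A^T = A -> exists a, eigenvalue A a.
Proof.
move=> A_sym; pose Ac := map_mx (real_complex R) A.
have [z /eigenvalueP [v vAc v_neq0]] := eigenvalue_closed Ac (ltn0Sn n).
pose vcT := map_mx Num.conj v^T; pose N := (v *m vcT) 0 0.
have N_gt0 : 0 < N by have := dotmx_is_dotmx v_neq0; rewrite dotmxE.
(* [v Ac vcT] is real because [Ac] is real symmetric; it also equals [z N] *)
have q_real : ((v *m Ac *m vcT) 0 0)^* = (v *m Ac *m vcT) 0 0.
  have AcC : map_mx Num.conj Ac = Ac.
    by apply/matrixP => i j; rewrite !mxE; exact: conjc_real.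
  have AcT : Ac^T = Ac by rewrite map_trmx A_sym.
  have vcTC : map_mx Num.conj vcT = v^T by apply/matrixP => i j; rewrite !mxE conjCK.
  transitivity ((map_mx Num.conj (v *m Ac *m vcT)) 0 0); first by rewrite [RHS]mxE.
  rewrite !map_mxM AcC vcTC -{1}(trmxK (_ *m v^T)) mxE !trmx_mul trmxK AcT.
  by rewrite map_trmx mulmxA.
have /eqP := q_real; rewrite vAc -scalemxAl mxE rmorphM /= -/N (geC0_conj (ltW N_gt0)).
rewrite (inj_eq (mulIf (lt0r_neq0 N_gt0))).
case: z vAc {q_real} => x y vAc /eqP [/eqP].
rewrite eq_sym -subr_eq0 opprK -mulr2n mulrn_eq0 /= => /eqP y0.
exists x; rewrite -(eigenvalue_map (real_complex R)).
by apply/eigenvalueP; exists v; rewrite // vAc y0 complexr0.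
Qed.

Definition orthodiagonalizable n (A : 'M[R]_n) :=
  exists (U : 'M[R]_n) (w : 'rV[R]_n), U *m U^T = 1%:M /\ A = U *m diag_mx w *m U^T.

Lemma unit_eigenvector n (A : 'M[R]_n) a :
  eigenvalue A a -> exists v : 'rV_n, v *m v^T = 1%:M /\ v *m A = a *: v.
Proof.
move=> /eigenvalueP [v0 v0A v0_neq0]; set r := (v0 *m v0^T) 0 0.
have r_gt0 : 0 < r := mul_row_tr_gt0 v0_neq0.
exists ((Num.sqrt r)^-1 *: v0); split; last by rewrite -scalemxAl v0A !scalerA mulrC.
rewrite linearZ /= -scalemxAl -scalemxAr scalerA [v0 *m v0^T]mx11_scalar -/r.
by rewrite -invfM -expr2 sqr_sqrtr ?ltW // scale_scalar_mx mulVf ?gt_eqF.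
Qed.

Lemma orthodiag_conj n (H A : 'M[R]_n) : H *m H^T = 1%:M ->
  orthodiagonalizable (H *m A *m H^T) -> orthodiagonalizable A.
Proof.
move=> HHT [U [w [UUT HAHT]]]; have HTH : H^T *m H = 1%:M := mulmx1C HHT.
exists (H^T *m U), w; split.
  by rewrite trmx_mul trmxK mulmxA -(mulmxA H^T) UUT mulmx1.
have -> : A = H^T *m (H *m A *m H^T) *m H.
  by rewrite !mulmxA HTH mul1mx -mulmxA HTH mulmx1.
by rewrite HAHT trmx_mul trmxK !mulmxA.
Qed.

Lemma orthodiag_block_scalar n a (A : 'M[R]_n) :
  orthodiagonalizable A -> orthodiagonalizable (block_mx (a%:M : 'M_1) 0 0 A).
Proof.
move=> [U [w [UUT ->]]]; exists (block_mx 1%:M 0 0 U), (row_mx (a%:M : 'rV_1) w).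
have diag_a : diag_mx (a%:M : 'rV_1) = a%:M by apply/matrixP => i j; rewrite !ord1 !mxE.
rewrite tr_block_mx !trmx0 trmx1 diag_mx_row diag_a !mulmx_block.
rewrite !mulmx0 !mul0mx !addr0 !add0r !mulmx1 !mul1mx UUT.
by split; rewrite ?mul0mx // -scalar_mx_block.
Qed.

Lemma conj_col_eigenvector n (A : 'M[R]_(1 + n)) a (v : 'rV_(1 + n))
    (H : 'M_(n, 1 + n)) :
  A^T = A -> v *m A = a *: v -> col_mx v H *m (col_mx v H)^T = 1%:M ->
  col_mx v H *m A *m (col_mx v H)^T = block_mx a%:M 0 0 (H *m A *m H^T).
Proof.
move=> A_sym vA; rewrite tr_col_mx mul_col_row (scalar_mx_block 1 n 1).
case/eq_block_mx => vvT vHT HvT _.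
have HAvT : H *m A *m v^T = 0.
  rewrite -mulmxA -[A *m v^T]trmxK trmx_mul trmxK A_sym vA linearZ /=.
  by rewrite -scalemxAr HvT scaler0.
by rewrite mul_col_mx mul_col_row vA -!scalemxAl vvT vHT HAvT scalemx1 scaler0.
Qed.

Theorem symmetric_orthodiag n (A : 'M[R]_n) : A^T = A -> orthodiagonalizable A.
Proof.
elim: n A => [|n IHn] A A_sym.
  by exists 1%:M, 0; split; [rewrite trmx1 mulmx1 | apply/matrixP => -[]].
have [a /unit_eigenvector [v [vvT vA]]] := symmetric_eigenvalue A_sym.
have [H [HHT Hrow]] := orthogonal_completion vvT.
pose H' := dsubmx (H : 'M_(1 + n, 1 + n)).
have HE : H = col_mx v H'.
  have <- : usubmx (H : 'M_(1 + n, 1 + n)) = v.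
    rewrite -Hrow; apply/matrixP => i j; rewrite !mxE ord1.
    by congr (H _ j); apply: val_inj.
  by rewrite vsubmxK.
apply: (orthodiag_conj HHT); rewrite HE (conj_col_eigenvector A_sym vA) -?HE //.
by apply/orthodiag_block_scalar/IHn; rewrite !trmx_mul trmxK A_sym mulmxA.
Qed.

End SymmetricSpectral.

Lemma char_poly_orthodiag (R : comNzRingType) n (U : 'M[R]_n) (w : 'rV[R]_n) :
  U *m U^T = 1%:M -> char_poly (U *m diag_mx w *m U^T) = \prod_i ('X - (w 0 i)%:P).
Proof.
move=> UUT; pose P := map_mx polyC U.
have PT : P^T = map_mx polyC U^T by rewrite map_trmx.
have PPT : P *m P^T = 1%:M by rewrite PT -map_mxM UUT map_mx1.
have charE : char_poly_mx (U *m diag_mx w *m U^T) = P *m char_poly_mx (diag_mx w) *m P^T.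
  rewrite /char_poly_mx mulmxBr mulmxBl !map_mxM -PT -/P.
  by rewrite mul_mx_scalar -scalemxAl PPT -mul_scalar_mx mulmx1.
rewrite /char_poly charE !det_mulmx mulrAC -det_mulmx PPT det1 mul1r.
rewrite -/(char_poly _) char_poly_trig ?diag_mx_is_trig //.
by apply: eq_bigr => i _; rewrite mxE eqxx mulr1n.
Qed.

Lemma mxtrace_congr_diag (R : comPzRingType) n m (W : 'M[R]_(n, m)) (w : 'rV[R]_n) :
  \tr (W^T *m diag_mx w *m W) = \sum_i w 0 i * \sum_j W i j ^+ 2.
Proof.
rewrite /mxtrace (eq_bigr (fun j => \sum_i w 0 i * W i j ^+ 2)) => [|j _].
  by rewrite exchange_big; apply: eq_bigr => i _; rewrite mulr_sumr.
by rewrite mxE; apply: eq_bigr => i _; rewrite mul_mx_diag !mxE expr2 mulrCA mulrA.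
Qed.

Lemma sum_row_sqnorm (R : comPzRingType) n m (W : 'M[R]_(n, m)) :
  W^T *m W = 1%:M -> \sum_i \sum_j W i j ^+ 2 = m%:R.
Proof.
move=> WTW; rewrite -(mxtrace1 R m) -WTW /mxtrace exchange_big.
by apply: eq_bigr => j _; rewrite mxE; apply: eq_bigr => i _; rewrite mxE expr2.
Qed.

Section TraceWeights.
Variable R : realDomainType.

Lemma row_sqnorm_le1 n m (W : 'M[R]_(n, m)) i :
  W^T *m W = 1%:M -> \sum_j W i j ^+ 2 <= 1.
Proof.
(* [P = W W^T] is a symmetric idempotent, so [P i i = \sum_l P i l ^+ 2 >= P i i ^+ 2] *)
move=> WTW; pose P := W *m W^T.
have Pii : \sum_j W i j ^+ 2 = P i i.
  by rewrite mxE; apply: eq_bigr => j _; rewrite mxE expr2.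
have PP : P *m P = P by rewrite mulmxA -(mulmxA W) WTW mulmx1.
have P_sym l : P l i = P i l by rewrite !mxE; apply: eq_bigr => j _; rewrite !mxE mulrC.
have Pii_ge0 : 0 <= P i i by rewrite -Pii sumr_ge0 // => j _; rewrite sqr_ge0.
clearbody P.
have : P i i ^+ 2 <= P i i.
  rewrite -{2}PP mxE (bigD1 i) //= P_sym -expr2 lerDl.
  by rewrite sumr_ge0 // => l _; rewrite P_sym -expr2 sqr_ge0.
by rewrite Pii; nra.
Qed.

Lemma weighted_sum_le_top (I : finType) k (s : seq R) (w h : I -> R) :
  (k <= #|I|)%N -> sorted (fun x y => y <= x) s -> perm_eq s [seq w i | i <- enum I] ->
  (forall i, 0 <= h i <= 1) -> \sum_i h i = k%:R ->
  \sum_i w i * h i <= \sum_(j < k) s`_j.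
Proof.
move=> kI s_sorted s_perm h01 h_sum.
have ks : (k <= size s)%N by rewrite (perm_size s_perm) size_map -cardE.
have ge_trans : transitive (fun x y : R => y <= x).
  by move=> y x z xy yz; exact: le_trans yz xy.
have s_mono := sorted_leq_nth ge_trans (@lexx _ _) 0 s_sorted.
(* with [c] the k-th largest value, [(w i - c) * h i <= max (w i - c) 0], and
   these maxima add up to [\sum_(j < k) (s`_j - c)] *)
pose c := s`_k.-1; pose f x := Num.max (x - c) 0.
have top_ge j : (j < k)%N -> c <= s`_j.
  by move=> jk; apply: s_mono; rewrite ?inE /=; lia.
have rest_le j : (k <= j < size s)%N -> s`_j <= c.
  by move=> /andP[kj js]; apply: s_mono; rewrite ?inE /=; lia.
have shift : \sum_i w i * h i = \sum_i (w i - c) * h i + c * k%:R.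
  by rewrite -h_sum mulr_sumr -big_split /=; apply: eq_bigr => i _; ring.
have excess_le : \sum_i (w i - c) * h i <= \sum_i f (w i).
  apply: ler_sum => i _; rewrite /f le_max; have /andP[h0 h1] := h01 i.
  by case: (leP 0 (w i - c)) => wc; apply/orP; [left|right]; nra.
have excess_top : \sum_i f (w i) = \sum_(j < k) (s`_j - c).
  transitivity (\sum_(x <- s) f x); first by rewrite (perm_big _ s_perm) big_map big_enum.
  rewrite (big_nth 0) (big_cat_nat _ ks) //= big_mkord.
  rewrite [X in _ + X]big_nat_cond [X in _ + X]big1 ?addr0 => [|j /andP[/rest_le cj _]].
    by apply: eq_bigr => j _; apply/max_idPl; rewrite subr_ge0 top_ge.
  by apply/max_idPr; rewrite subr_le0.
rewrite shift; apply: le_trans (lerD excess_le (lexx _)) _.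
by rewrite excess_top sumrB sumr_const card_ord mulr_natr subrK.
Qed.

End TraceWeights.

Lemma congr_colsub1 (R : pzRingType) n k (f : 'I_k -> 'I_n) (M : 'M[R]_n) :
  (colsub f 1%:M)^T *m M *m colsub f 1%:M = mxsub f f M.
Proof. by rewrite trmx_mxsub trmx1 -mulmxA mulmx_colsub mulmx1 -mxsub_mul mul1mx. Qed.

Lemma trmx_congr_diag (R : comPzRingType) n (P : 'M[R]_n) (w : 'rV[R]_n) :
  (P *m diag_mx w *m P^T)^T = P *m diag_mx w *m P^T.
Proof. by rewrite !trmx_mul trmxK tr_diag_mx mulmxA. Qed.

Section KyFan.
Variables (R : realType) (d : nat).

Lemma eigs_dec_orthodiag (U : 'M[R]_d) (w : 'rV[R]_d) : U *m U^T = 1%:M ->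
  sorted (fun x y => y <= x) (eigs_dec (U *m diag_mx w *m U^T)) /\
  perm_eq (eigs_dec (U *m diag_mx w *m U^T)) [seq w 0 i | i <- enum 'I_d].
Proof.
move=> UUT; set X := U *m diag_mx w *m U^T.
have charX : char_poly X = \prod_(a <- [seq w 0 i | i <- enum 'I_d]) ('X - a%:P).
  by rewrite char_poly_orthodiag // big_map big_enum.
rewrite /eigs_dec; case: pselect => [h|[]]; last first.
  exists (sort (fun x y : R => y <= x) [seq w 0 i | i <- enum 'I_d]); split.
    by apply: sort_sorted => x y; apply: le_total.
  by rewrite charX; apply: perm_big; rewrite perm_sym perm_sort.
case: (cid h) => s [s_sorted charX'] /=; split => //.
by apply: prod_XsubC_eq; rewrite -charX' charX.
Qed.

Definition top_eig_sum k (X : 'M[R]_d) := \sum_(1 <= j < k.+1) eig_dec X j.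

Lemma top_eig_sumE k X : top_eig_sum k X = \sum_(j < k) (eigs_dec X)`_j.
Proof. by rewrite /top_eig_sum big_add1 big_mkord. Qed.

Lemma trace_compress_le_top_eig_sum k (X : 'M[R]_d) (V : 'M[R]_(d, k)) :
  (k <= d)%N -> X^T = X -> V^T *m V = 1%:M -> \tr (V^T *m X *m V) <= top_eig_sum k X.
Proof.
move=> kd X_sym VTV; have [U [w [UUT ->]]] := symmetric_orthodiag X_sym.
have [s_sorted s_perm] := eigs_dec_orthodiag w UUT.
pose W := U^T *m V.
have WTW : W^T *m W = 1%:M.
  by rewrite trmx_mul trmxK mulmxA -(mulmxA V^T) UUT mulmx1.
have -> : V^T *m (U *m diag_mx w *m U^T) *m V = W^T *m diag_mx w *m W.
  by rewrite trmx_mul trmxK !mulmxA.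
rewrite mxtrace_congr_diag top_eig_sumE.
apply: weighted_sum_le_top s_sorted s_perm _ (sum_row_sqnorm WTW); first by rewrite card_ord.
by move=> i; rewrite row_sqnorm_le1 // andbT sumr_ge0 // => j _; rewrite sqr_ge0.
Qed.

Lemma top_eig_sum_attained k (X : 'M[R]_d) : (k <= d)%N -> X^T = X ->
  exists V : 'M[R]_(d, k), V^T *m V = 1%:M /\ \tr (V^T *m X *m V) = top_eig_sum k X.
Proof.
move=> kd X_sym; have [U [w [UUT ->]]] := symmetric_orthodiag X_sym.
have UTU : U^T *m U = 1%:M := mulmx1C UUT.
have [_ s_perm] := eigs_dec_orthodiag w UUT.
have /tuple_permP [p s_eq] :
  perm_eq (eigs_dec (U *m diag_mx w *m U^T)) [tuple w 0 i | i < d] by exact: s_perm.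
(* select the eigenvectors of the [k] largest eigenvalues *)
pose f (j : 'I_k) := p (widen_ord kd j); pose E := colsub f (1%:M : 'M[R]_d).
have f_inj : injective f by move=> i j /perm_inj/(congr1 val)/= /val_inj.
exists (U *m E); split.
  rewrite trmx_mul mulmxA -(mulmxA E^T) UTU mulmx1 -(mulmx1 E^T) congr_colsub1.
  by apply/matrixP => i j; rewrite !mxE (inj_eq f_inj).
rewrite trmx_mul !mulmxA -(mulmxA E^T) UTU mulmx1 -(mulmxA _ U^T) UTU mulmx1.
rewrite congr_colsub1 top_eig_sumE /mxtrace; apply: eq_bigr => j _.
rewrite !mxE eqxx mulr1n s_eq -[nat_of_ord j]/(nat_of_ord (widen_ord kd j)).
by rewrite nth_mktuple tnth_mktuple.
Qed.

End KyFan.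

Section Geodesic.
Variables (R : realType) (d : nat).

Definition congr_powdiag (P : 'M[R]_d) (mu : 'rV[R]_d) (t : R) :=
  P *m diag_mx (map_mx (fun x => powR x t) mu) *m P^T.

Lemma mpow_congr_powdiag (X : 'M[R]_d) : X^T = X ->
  exists U mu, forall t, mpow X t = congr_powdiag U mu t.
Proof.
move=> X_sym; rewrite /mpow; case: pselect => [h|no_decomp]; last first.
  exfalso; apply: no_decomp.
  by have [U [w UwE]] := symmetric_orthodiag X_sym; exists (U, w).
by case: (cid h) => [[U w] _] /=; exists U, w.
Qed.

Lemma geodesic_congr_powdiag (A B : 'M[R]_d) : A^T = A -> B^T = B ->
  exists P mu, forall t, geodesic A B t = congr_powdiag P mu t.
Proof.
move=> A_sym B_sym; have [U [w mpowA]] := mpow_congr_powdiag A_sym.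
have mpowA_sym t : (mpow A t)^T = mpow A t by rewrite mpowA trmx_congr_diag.
have [Q [mu mpowM]] : exists Q mu, forall t,
    mpow (mpow A (- 2^-1) *m B *m mpow A (- 2^-1)) t = congr_powdiag Q mu t.
  by apply: mpow_congr_powdiag; rewrite !trmx_mul mpowA_sym B_sym mulmxA.
exists (mpow A 2^-1 *m Q), mu => t.
by rewrite /geodesic mpowM /congr_powdiag trmx_mul mpowA_sym !mulmxA.
Qed.

Variables (k : nat) (P : 'M[R]_d) (mu : 'rV[R]_d) (V : 'M[R]_(d, k)).

Lemma trace_compress_congr_powdiagE t :
  \tr (V^T *m congr_powdiag P mu t *m V) =
  \sum_i powR (mu 0 i) t * \sum_j (P^T *m V) i j ^+ 2.
Proof.
have -> : V^T *m congr_powdiag P mu t *m V =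
    (P^T *m V)^T *m diag_mx (map_mx (fun x => powR x t) mu) *m (P^T *m V).
  by rewrite trmx_mul trmxK !mulmxA.
by rewrite mxtrace_congr_diag; apply: eq_bigr => i _; rewrite mxE.
Qed.

Lemma trace_compress_congr_powdiag_ge0 t :
  0 <= \tr (V^T *m congr_powdiag P mu t *m V).
Proof.
rewrite trace_compress_congr_powdiagE sumr_ge0 // => i _.
by rewrite mulr_ge0 ?powR_ge0 ?sumr_ge0 // => j _; rewrite sqr_ge0.
Qed.

Lemma trace_compress_congr_powdiag_convex s u a :
  0 <= s -> 0 <= u -> 0 <= a <= 1 ->
  \tr (V^T *m congr_powdiag P mu ((1 - a) * s + a * u) *m V) <=
  (1 - a) * \tr (V^T *m congr_powdiag P mu s *m V) +
  a * \tr (V^T *m congr_powdiag P mu u *m V).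
Proof.
move=> s0 u0 a01; rewrite !trace_compress_congr_powdiagE !mulr_sumr -big_split /=.
apply: ler_sum => i _; rewrite !mulrA -mulrDl ler_wpM2r ?powR_convex_exponent //.
by rewrite sumr_ge0 // => j _; rewrite sqr_ge0.
Qed.

End Geodesic.

Theorem mainTheorem2 (R : realType) (d k : nat) (p : R) :
  (1 <= k <= d)%N -> 1 <= p ->
  geod_convex (fun X : 'M[R]_d =>
    powR `| \sum_(1 <= j < k.+1) eig_dec X j | p).
Proof.
move=> /andP[_ kd] p1 A B [A_sym _] [B_sym _] s u a /andP[s0 _] /andP[u0 _] a01.
have [P [mu geodesicE]] := geodesic_congr_powdiag A_sym B_sym; rewrite !geodesicE.
have gamma_sym t : (congr_powdiag P mu t)^T = congr_powdiag P mu t by exact: trmx_congr_diag.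
have top_ge0 t : 0 <= top_eig_sum k (congr_powdiag P mu t).
  have [V [_ <-]] := top_eig_sum_attained kd (gamma_sym t).
  exact: trace_compress_congr_powdiag_ge0.
apply: (norm_powR_le_convex_comb p1 (top_ge0 _) (top_ge0 s) (top_ge0 u) a01).
(* Ky Fan: compare with the trace along a maximiser at the intermediate point *)
have [V [VTV <-]] := top_eig_sum_attained kd (gamma_sym ((1 - a) * s + a * u)).
apply: le_trans (trace_compress_congr_powdiag_convex P mu V s0 u0 a01) _.
have /andP[a0 a1] := a01.
by rewrite lerD // ler_wpM2l ?subr_ge0 // trace_compress_le_top_eig_sum.
Qed.
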